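(* Let $0<\lambda<\frac{5-\sqrt{21}}{2}$ and let $K$ be the attractor of the IFS $f_1(x)=\lambda x$, $f_2(x)=\lambda x+2\lambda$, $f_3(x)=\lambda x+3\lambda-\lambda^2$, $f_4(x)=\lambda x+1-\lambda$. Then $U_{2i}=\emptyset$ for every integer $i\ge3$ such that $2i$ is not a power of $2$.
   Context: A coding of $x\in K$ is a sequence $(i_n)\in\{1,2,3,4\}^{\mathbb{N}}$ with $x=\lim_{n\to\infty}f_{i_1}\circ\cdots\circ f_{i_n}(0)$. $U_k$ denotes the set of $x\in K$ having exactly $k$ distinct codings. *)

From Stdlib Require Import Reals Lra Lia List.
Import ListNotations.
Open Scope R_scope.

(* The four maps of the IFS, indexed by digits 1..4 (other indices unused). *)
Definition f (lam : R) (i : nat) (x : R) : R :=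
  match i with
  | 1%nat => lam * x
  | 2%nat => lam * x + 2 * lam
  | 3%nat => lam * x + 3 * lam - lam ^ 2
  | _ => lam * x + 1 - lam
  end.

(* comp lam c n y = f_{c 0} o f_{c 1} o ... o f_{c (n-1)} (y) *)
Fixpoint comp (lam : R) (c : nat -> nat) (n : nat) (y : R) : R :=
  match n with
  | O => y
  | S m => comp lam c m (f lam (c m) y)
  end.

Definition is_digit_seq (c : nat -> nat) : Prop :=
  forall n, (1 <= c n <= 4)%nat.

Definition is_coding (lam : R) (c : nat -> nat) (x : R) : Prop :=
  is_digit_seq c /\ Un_cv (fun n => comp lam c n 0) x.

(* The attractor K: the set of points admitting a coding. *)
Definition in_K (lam : R) (x : R) : Prop := exists c, is_coding lam c x.

Definition exactly_codings (lam : R) (x : R) (k : nat) : Prop :=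
  exists l : list (nat -> nat),
    length l = k /\ NoDup l /\ (forall c, In c l <-> is_coding lam c x).

Definition U (lam : R) (k : nat) (x : R) : Prop :=
  in_K lam x /\ exactly_codings lam x k.

(* Among the first-level images f_j[0,1] only f_2[0,1] and f_3[0,1] overlap, and a
   point in the overlap lies in f_2 f_4[0,1] = f_3 f_1[0,1], since f_2 o f_4 = f_3 o f_1.
   So if the codings of x do not all share their first digit, they are exactly the
   sequences 24w and 31w with w a coding of one point y, and x has twice as many
   codings as y; if they all share their first digit j, x has as many codings as
   f_j^{-1} x.  Two distinct codings differ at some position, so repeating these
   steps shows that every finite positive number of codings is a power of 2. *)

From Pilot Require Import Defs.
From Stdlib Require Import Reals Lra Lia List.
From Stdlib Require Import Classical FunctionalExtensionality.
(* Reals defines its own [comp]; re-import so that [comp] is the IFS composition. *)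
Import Defs.
Open Scope R_scope.

Lemma Un_cv_affine u l a b : Un_cv u l -> Un_cv (fun n => a * u n + b) (a * l + b).
Proof. apply (continuity_seq (fun y => a * y + b)). reg. Qed.

Lemma Un_cv_const a : Un_cv (fun _ => a) a.
Proof.
  intros e He. exists 0%nat. intros. unfold R_dist. rewrite Rminus_diag, Rabs_R0. exact He.
Qed.

Lemma Un_cv_bounds u l a b : (forall n, a <= u n <= b) -> Un_cv u l -> a <= l <= b.
Proof.
  intros Hu Hl. split.
  - apply (Rle_cv_lim (fun n => proj1 (Hu n)) (Un_cv_const a) Hl).
  - apply (Rle_cv_lim (fun n => proj2 (Hu n)) Hl (Un_cv_const b)).
Qed.

(* [exactly_codings lam x] is convertible to [has_card (fun c => is_coding lam c x)]. *)
Definition has_card {A : Type} (P : A -> Prop) (k : nat) : Prop :=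
  exists l : list A, length l = k /\ NoDup l /\ (forall a, In a l <-> P a).

Lemma has_card_unique {A : Type} (P : A -> Prop) k1 k2 :
  has_card P k1 -> has_card P k2 -> k1 = k2.
Proof.
  intros [l1 [<- [N1 H1]]] [l2 [<- [N2 H2]]].
  apply Nat.le_antisymm; apply NoDup_incl_length; auto; intros a Ha.
  - apply H2, H1, Ha.
  - apply H1, H2, Ha.
Qed.

Lemma has_card_pos {A : Type} (P : A -> Prop) k a : has_card P k -> P a -> (1 <= k)%nat.
Proof.
  intros [[|b l] [<- [_ Hl]]] Ha; simpl; [apply Hl in Ha; destruct Ha | lia].
Qed.

Lemma has_card_two {A : Type} (P : A -> Prop) k : has_card P k -> (1 < k)%nat ->
  exists a b, P a /\ P b /\ a <> b.
Proof.
  intros [[|a [|b l]] [<- [Hn Hl]]] Hk; simpl in Hk; try lia.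
  exists a, b. split; [|split].
  - apply Hl; simpl; auto.
  - apply Hl; simpl; auto.
  - intros <-. inversion Hn as [|x s Hna]. apply Hna; simpl; auto.
Qed.

Lemma has_card_split {A : Type} (P : A -> Prop) k (b : A -> bool) : has_card P k ->
  exists k1 k2, k = (k1 + k2)%nat /\
    has_card (fun a => P a /\ b a = true) k1 /\ has_card (fun a => P a /\ b a = false) k2.
Proof.
  intros [l [<- [Hn Hl]]].
  exists (length (filter b l)), (length (filter (fun a => negb (b a)) l)).
  split; [symmetry; apply filter_length|split].
  - exists (filter b l). split; [reflexivity|split; [apply NoDup_filter; auto|]].
    intro a. rewrite filter_In, Hl. tauto.
  - exists (filter (fun a => negb (b a)) l).
    split; [reflexivity|split; [apply NoDup_filter; auto|]].
    intro a. rewrite filter_In, Hl, Bool.negb_true_iff. tauto.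
Qed.

Lemma has_card_bij {A B : Type} (P : A -> Prop) (Q : B -> Prop) (g : A -> B) (h : B -> A) k :
  (forall a, P a -> Q (g a)) -> (forall b, Q b -> P (h b)) ->
  (forall a, P a -> h (g a) = a) -> (forall b, Q b -> g (h b) = b) ->
  has_card P k -> has_card Q k.
Proof.
  intros PQ QP hg gh [l [<- [Hn Hl]]].
  exists (map g l). split; [apply length_map|split].
  - apply NoDup_map_NoDup_ForallPairs; auto.
    intros a a' Ha Ha' E. rewrite <- (hg a) by apply Hl, Ha. rewrite E. apply hg, Hl, Ha'.
  - intro b. rewrite in_map_iff. split.
    + intros [a [<- Ha]]. apply PQ, Hl, Ha.
    + intro Hb. exists (h b). split; auto. apply Hl; auto.
Qed.

Definition shift (c : nat -> nat) : nat -> nat := fun n => c (S n).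

Definition scons (j : nat) (c : nat -> nat) : nat -> nat :=
  fun n => match n with O => j | S m => c m end.

Lemma scons_shift c : scons (c 0%nat) (shift c) = c.
Proof. apply functional_extensionality. intros [|n]; reflexivity. Qed.

Lemma comp_S lam c n y : comp lam c (S n) y = f lam (c 0%nat) (comp lam (shift c) n y).
Proof.
  revert y. induction n as [|n IH]; intro y; [reflexivity|].
  change (comp lam c (S (S n)) y) with (comp lam c (S n) (f lam (c (S n)) y)).
  rewrite IH. reflexivity.
Qed.

Lemma f_affine lam j y : f lam j y = lam * y + f lam j 0.
Proof. destruct j as [|[|[|[|j]]]]; simpl; ring. Qed.

Definition finv (lam : R) (j : nat) (x : R) : R := (x - f lam j 0) / lam.

Section Codings.

Variable lam : R.
Hypothesis lam_pos : 0 < lam.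

Lemma is_coding_head c x : is_coding lam c x <->
  (1 <= c 0%nat <= 4)%nat /\ is_coding lam (shift c) (finv lam (c 0%nat) x).
Proof.
  split.
  - intros [Hd Hc]. split; [apply Hd|split; [intro n; apply Hd|]].
    replace (finv lam (c 0%nat) x) with (/ lam * x + - f lam (c 0%nat) 0 / lam)
      by (unfold finv; field; lra).
    apply (Un_cv_ext (fun n => / lam * comp lam c (n + 1) 0 + - f lam (c 0%nat) 0 / lam)).
    + intro n. rewrite Nat.add_1_r, comp_S, f_affine. field. lra.
    + apply Un_cv_affine, (CV_shift' (fun n => comp lam c n 0)), Hc.
  - intros [H0 [Hd Hc]]. split; [intros [|n]; [exact H0|apply Hd]|].
    apply (CV_shift _ 1).
    replace x with (lam * finv lam (c 0%nat) x + f lam (c 0%nat) 0)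
      by (unfold finv; field; lra).
    apply (Un_cv_ext (fun n => lam * comp lam (shift c) n 0 + f lam (c 0%nat) 0)).
    + intro n. rewrite Nat.add_1_r, comp_S. symmetry. apply f_affine.
    + apply Un_cv_affine, Hc.
Qed.

Lemma is_coding_shift c x : is_coding lam c x ->
  is_coding lam (shift c) (finv lam (c 0%nat) x).
Proof. intro Hc. apply (is_coding_head c x), Hc. Qed.

Lemma is_coding_scons2 j k c x : (1 <= j <= 4)%nat -> (1 <= k <= 4)%nat ->
  is_coding lam (scons j (scons k c)) x <-> is_coding lam c (finv lam k (finv lam j x)).
Proof.
  intros Hj Hk. rewrite is_coding_head, (is_coding_head (shift _)). simpl. tauto.
Qed.

Lemma card_codings_head j x k : (1 <= j <= 4)%nat ->
  (forall c, is_coding lam c x -> c 0%nat = j) ->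
  exactly_codings lam x k -> exactly_codings lam (finv lam j x) k.
Proof.
  intros Hj Hall. apply (has_card_bij _ _ shift (scons j)).
  - intros c Hc. rewrite <- (Hall c Hc). apply is_coding_shift, Hc.
  - intros c Hc. apply is_coding_head. split; assumption.
  - intros c Hc. rewrite <- (Hall c Hc). apply scons_shift.
  - reflexivity.
Qed.

Lemma card_codings_prefix2 (P : (nat -> nat) -> Prop) j k x n :
  (1 <= j <= 4)%nat -> (1 <= k <= 4)%nat ->
  (forall c, P c <-> is_coding lam c x /\ c 0%nat = j) -> (forall c, P c -> c 1%nat = k) ->
  has_card P n -> exactly_codings lam (finv lam k (finv lam j x)) n.
Proof.
  intros Hj Hk HP Hsecond.
  assert (Hc : forall c, P c -> scons j (scons k (shift (shift c))) = c).
  { intros c Pc. rewrite <- (proj2 (proj1 (HP c) Pc)), <- (Hsecond c Pc).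
    change (c 1%nat) with (shift c 0%nat). rewrite !scons_shift. reflexivity. }
  apply (has_card_bij _ _ (fun c => shift (shift c)) (fun c => scons j (scons k c))).
  - intros c Pc. rewrite <- is_coding_scons2 by assumption. rewrite Hc by exact Pc.
    apply HP, Pc.
  - intros c Hcx. apply HP. split; [apply is_coding_scons2; assumption|reflexivity].
  - exact Hc.
  - reflexivity.
Qed.

Hypothesis lam_lt_quarter : lam < 1 / 4.

Lemma comp_unit_interval c n y : 0 <= y <= 1 -> 0 <= comp lam c n y <= 1.
Proof.
  revert y. induction n as [|n IH]; intros y Hy; [exact Hy|].
  apply IH. rewrite f_affine. destruct (c n) as [|[|[|[|j]]]]; simpl; nra.
Qed.

Lemma coding_unit_interval c x : is_coding lam c x -> 0 <= x <= 1.
Proof.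
  intros [_ Hc]. apply (Un_cv_bounds _ _ _ _ (fun n => comp_unit_interval c n 0 ltac:(lra)) Hc).
Qed.

Lemma f_finv j x : f lam j (finv lam j x) = x.
Proof. rewrite f_affine. unfold finv. field. lra. Qed.

Lemma f_le j y z : y <= z -> f lam j y <= f lam j z.
Proof. rewrite (f_affine _ _ y), (f_affine _ _ z). nra. Qed.

Lemma coding_head_bounds c x : is_coding lam c x ->
  f lam (c 0%nat) 0 <= x <= f lam (c 0%nat) 1.
Proof.
  intro Hc. apply is_coding_shift, coding_unit_interval in Hc.
  rewrite <- (f_finv (c 0%nat) x). split; apply f_le; apply Hc.
Qed.

Lemma coding_second_bounds c x : is_coding lam c x ->
  f lam (c 0%nat) (f lam (c 1%nat) 0) <= x <= f lam (c 0%nat) (f lam (c 1%nat) 1).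
Proof.
  intro Hc. apply is_coding_shift, coding_head_bounds in Hc.
  rewrite <- (f_finv (c 0%nat) x). split; apply f_le; apply Hc.
Qed.

Hypothesis lam_gap : 0 < lam ^ 2 - 5 * lam + 1.

Lemma digit_cases j : (1 <= j <= 4)%nat -> j = 1%nat \/ j = 2%nat \/ j = 3%nat \/ j = 4%nat.
Proof. lia. Qed.

(* The bound on lam separates f_3[0,1] from f_4[0,1]. *)
Lemma f_images_overlap j k x : (1 <= j <= 4)%nat -> (1 <= k <= 4)%nat -> j <> k ->
  f lam j 0 <= x <= f lam j 1 -> f lam k 0 <= x <= f lam k 1 ->
  (j = 2 /\ k = 3)%nat \/ (j = 3 /\ k = 2)%nat.
Proof.
  intros Hj Hk Hjk Ij Ik.
  destruct (digit_cases j Hj) as [-> | [-> | [-> | ->]]];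
    destruct (digit_cases k Hk) as [-> | [-> | [-> | ->]]];
    simpl in *; try lia; exfalso; nra.
Qed.

Lemma coding_heads c d x : is_coding lam c x -> is_coding lam d x -> c 0%nat <> d 0%nat ->
  (c 0%nat = 2 /\ d 0%nat = 3)%nat \/ (c 0%nat = 3 /\ d 0%nat = 2)%nat.
Proof.
  intros Hc Hd Hne. apply (f_images_overlap _ _ x); auto.
  - apply (proj1 Hc).
  - apply (proj1 Hd).
  - apply coding_head_bounds, Hc.
  - apply coding_head_bounds, Hd.
Qed.

Lemma overlap_second_digits p q x : is_coding lam p x -> p 0%nat = 2%nat ->
  is_coding lam q x -> q 0%nat = 3%nat -> p 1%nat = 4%nat /\ q 1%nat = 1%nat.
Proof.
  intros Hp Ep Hq Eq.
  pose proof (coding_head_bounds p x Hp) as Bp. pose proof (coding_head_bounds q x Hq) as Bq.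
  pose proof (coding_second_bounds p x Hp) as Sp. pose proof (coding_second_bounds q x Hq) as Sq.
  pose proof (proj1 Hp 1%nat) as Dp. pose proof (proj1 Hq 1%nat) as Dq.
  rewrite Ep, Eq in *.
  simpl in Bp, Bq. split.
  - destruct (digit_cases _ Dp) as [E|[E|[E|E]]]; rewrite E in Sp; simpl in Sp;
      auto; exfalso; nra.
  - destruct (digit_cases _ Dq) as [E|[E|[E|E]]]; rewrite E in Sq; simpl in Sq;
      auto; exfalso; nra.
Qed.

(* f_2 o f_4 = f_3 o f_1, so the two overlapping second-level cylinders coincide. *)
Lemma finv_4_2_eq_finv_1_3 x : finv lam 4 (finv lam 2 x) = finv lam 1 (finv lam 3 x).
Proof. unfold finv. simpl. field. lra. Qed.

Lemma card_codings_overlap p q x k : is_coding lam p x -> p 0%nat = 2%nat ->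
  is_coding lam q x -> q 0%nat = 3%nat -> exactly_codings lam x k ->
  exists a, k = (2 * a)%nat /\ exactly_codings lam (finv lam 4 (finv lam 2 x)) a.
Proof.
  intros Hp Ep Hq Eq Hk.
  assert (Hheads : forall c, is_coding lam c x -> c 0%nat = 2%nat \/ c 0%nat = 3%nat).
  { intros c Hc. destruct (Nat.eq_dec (c 0%nat) 2) as [E|E]; [left; exact E|right].
    rewrite <- Ep in E. destruct (coding_heads c p x Hc Hp E) as [[? ?]|[? ?]]; lia. }
  destruct (has_card_split (fun c => is_coding lam c x) _ (fun c => Nat.eqb (c 0%nat) 2) Hk)
    as [k2 [k3 [-> [H2 H3]]]].
  assert (C2 : exactly_codings lam (finv lam 4 (finv lam 2 x)) k2).
  { refine (card_codings_prefix2 _ 2 4 x k2 _ _ _ _ H2); [lia|lia| |].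
    - intro c. rewrite Nat.eqb_eq. reflexivity.
    - intros c [Hc E]. apply Nat.eqb_eq in E.
      exact (proj1 (overlap_second_digits c q x Hc E Hq Eq)). }
  assert (C3 : exactly_codings lam (finv lam 4 (finv lam 2 x)) k3).
  { rewrite finv_4_2_eq_finv_1_3.
    refine (card_codings_prefix2 _ 3 1 x k3 _ _ _ _ H3); [lia|lia| |].
    - intro c. rewrite Nat.eqb_neq. split; intros [Hc E]; split; auto.
      + destruct (Hheads c Hc); lia.
      + lia.
    - intros c [Hc E]. apply Nat.eqb_neq in E.
      assert (E3 : c 0%nat = 3%nat) by (destruct (Hheads c Hc); lia).
      exact (proj2 (overlap_second_digits p c x Hp Ep Hc E3)). }
  exists k2. split; [|exact C2].
  rewrite (has_card_unique _ _ _ C3 C2). lia.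
Qed.

Lemma card_codings_distinct_heads p q x k : is_coding lam p x -> is_coding lam q x ->
  p 0%nat <> q 0%nat -> exactly_codings lam x k ->
  exists y a, k = (2 * a)%nat /\ exactly_codings lam y a.
Proof.
  intros Hp Hq Hne Hk.
  destruct (coding_heads p q x Hp Hq Hne) as [[Ep Eq]|[Ep Eq]].
  - destruct (card_codings_overlap p q x k Hp Ep Hq Eq Hk) as [a Ha]. eauto.
  - destruct (card_codings_overlap q p x k Hq Eq Hp Ep Hk) as [a Ha]. eauto.
Qed.

Lemma distinct_heads_reached n : forall a b x k,
  is_coding lam a x -> is_coding lam b x -> a n <> b n -> exactly_codings lam x k ->
  exists y p q, exactly_codings lam y k /\ is_coding lam p y /\ is_coding lam q y /\
    p 0%nat <> q 0%nat.
Proof.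
  induction n as [|n IH]; intros a b x k Ha Hb Hn Hk; [exists x, a, b; auto|].
  destruct (Nat.eq_dec (a 0%nat) (b 0%nat)) as [E|E]; [|exists x, a, b; auto].
  destruct (classic (forall d, is_coding lam d x -> d 0%nat = a 0%nat)) as [All|NAll].
  - apply (IH (shift a) (shift b) (finv lam (a 0%nat) x)); auto.
    + apply is_coding_shift, Ha.
    + rewrite E. apply is_coding_shift, Hb.
    + apply card_codings_head; [apply (proj1 Ha)|exact All|exact Hk].
  - apply not_all_ex_not in NAll as [d Hd]. apply imply_to_and in Hd as [Hd Nd].
    exists x, d, a. auto.
Qed.

Lemma card_codings_halve x k : exactly_codings lam x k -> (1 < k)%nat ->
  exists y a, k = (2 * a)%nat /\ exactly_codings lam y a.
Proof.
  intros Hk Hlt.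
  destruct (has_card_two (fun c => is_coding lam c x) _ Hk Hlt) as [a [b [Ha [Hb Hab]]]].
  assert (Hn : exists n, a n <> b n).
  { apply not_all_ex_not. intro E. apply Hab, functional_extensionality, E. }
  destruct Hn as [n Hn].
  destruct (distinct_heads_reached n a b x k Ha Hb Hn Hk) as [y [p [q [Hy [Hp [Hq Hpq]]]]]].
  exact (card_codings_distinct_heads p q y k Hp Hq Hpq Hy).
Qed.

Lemma card_codings_pow2 k : forall x, (1 <= k)%nat -> exactly_codings lam x k ->
  exists m, k = (2 ^ m)%nat.
Proof.
  induction k as [k IH] using (well_founded_induction Wf_nat.lt_wf). intros x Hpos Hk.
  destruct (Nat.eq_dec k 1) as [->|Hne]; [exists 0%nat; reflexivity|].
  destruct (card_codings_halve x k Hk ltac:(lia)) as [y [a [-> Ha]]].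
  destruct (IH a ltac:(lia) y ltac:(lia) Ha) as [m ->].
  exists (S m). reflexivity.
Qed.

End Codings.

Lemma small_ratio_bounds lam : lam < (5 - sqrt 21) / 2 ->
  lam < 1 / 4 /\ 0 < lam ^ 2 - 5 * lam + 1.
Proof.
  intro Hlt. pose proof (sqrt_pos 21). pose proof (sqrt_sqrt 21 ltac:(lra)).
  assert (9 / 2 < sqrt 21) by nra.
  split; nra.
Qed.

Theorem lemma2p31 (lam : R) (Hpos : 0 < lam) (Hlt : lam < (5 - sqrt 21) / 2)
  (i : nat) (Hi : (3 <= i)%nat) (Hnp : ~ (exists m : nat, (2 * i = 2 ^ m)%nat)) :
  forall x : R, ~ U lam (2 * i) x.
Proof.
  intros x [[c Hc] Hk].
  destruct (small_ratio_bounds lam Hlt) as [Hquarter Hgap].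
  apply Hnp, (card_codings_pow2 lam Hpos Hquarter Hgap _ x); [|exact Hk].
  exact (has_card_pos (fun c => is_coding lam c x) _ c Hk Hc).
Qed.
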